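(* Let $R$ be a principal Artinian ring, let $f, g \in R[x]$ with $g$ of positive degree and invertible leading coefficient, let $c = c(f)$ be a generator of the content ideal of $f$, and let $h \in R[x]$ satisfy $f = c\cdot h$. Put $\bar R = R/\mathrm{Ann}(c)$ and let $\bar h, \bar g$ be the images of $h, g$ in $\bar R[x]$. Then $$\mathrm{Rres}_R(f,g) = \{\, c s : s \in R,\ (s \bmod \mathrm{Ann}(c)) \in \mathrm{Rres}_{\bar R}(\bar h, \bar g)\,\},$$ i.e. $\mathrm{rres}_R(f,g) = c\cdot \mathrm{rres}_{R/\mathrm{Ann}(c)}(h,g)$.
   Context: A principal Artinian ring is a commutative ring with identity in which every ideal is principal and which satisfies the descending chain condition on ideals. For $f = \sum a_i x^i$, the content ideal is $C(f) = (a_0,\dots,a_d)$ and $c(f)$ is any generator of it. $\mathrm{Ann}(c) = \{s \in R : sc = 0\}$. For a commutative ring $S$ and $f,g\in S[x]$, $\mathrm{Rres}_S(f,g) = (f,g)\cap S$, where $(f,g)$ is the ideal of $S[x]$ generated by $f,g$; $\mathrm{rres}_S(f,g)$ denotes a generator of it (for a quotient ring, a lift of a generator to $R$). *)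

From HB Require Import structures.
From mathcomp Require Import all_boot all_order all_algebra.
Set Implicit Arguments. Unset Strict Implicit. Unset Printing Implicit Defensive.
Import GRing.Theory.
Local Open Scope ring_scope.

Definition is_ideal (R : comNzRingType) (I : R -> Prop) : Prop :=
  [/\ I 0, (forall x y, I x -> I y -> I (x + y)) & (forall r x, I x -> I (r * x))].

Definition generates (R : comNzRingType) (a : R) (I : R -> Prop) : Prop :=
  forall x, I x <-> exists r : R, x = r * a.

Definition principal_artinian (R : comNzRingType) : Prop :=
  (forall I : R -> Prop, is_ideal I -> exists a : R, generates a I) /\
  (forall I : nat -> R -> Prop,
      (forall n, is_ideal (I n)) ->
      (forall n x, I n.+1 x -> I n x) ->
      exists N, forall n, (N <= n)%N -> forall x, I n x <-> I N x).

Definition content_ideal (R : comNzRingType) (f : {poly R}) : R -> Prop :=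
  fun x => exists r : 'I_(size f) -> R, x = \sum_(i < size f) r i * f`_i.

Definition Ann (R : comNzRingType) (c : R) : R -> Prop := fun s => s * c = 0.

Definition Rres (R : comNzRingType) (f g : {poly R}) : R -> Prop :=
  fun r => exists u v : {poly R}, u * f + v * g = r%:P.

(* Membership of (s mod Ann(c)) in Rres_{R/Ann(c)}(hbar, gbar), expressed via
   lifts: polynomials over R/Ann(c) are represented by polynomials over R, and
   two of them are equal in (R/Ann(c))[x] iff every coefficient of their
   difference lies in Ann(c). *)
Definition eq_mod_Ann (R : comNzRingType) (c : R) (p q : {poly R}) : Prop :=
  forall i, Ann c (p - q)`_i.

Definition Rres_mod_Ann (R : comNzRingType) (c : R) (h g : {poly R}) : R -> Prop :=
  fun s => exists u v : {poly R}, eq_mod_Ann c (u * h + v * g) s%:P.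

From HB Require Import structures.
From mathcomp Require Import all_boot all_order all_algebra.
From mathcomp Require Import zify.
Set Implicit Arguments. Unset Strict Implicit. Unset Printing Implicit Defensive.
Import GRing.Theory.
Local Open Scope ring_scope.

(* The heart of the matter is the following cancellation fact:
   if g has degree >= 1 and a unit leading coefficient, and v * g differs from
   a constant r by a multiple of c, then v itself is a multiple of c.  Indeed,
   modulo c the product v * g would otherwise have positive degree (a unit
   leading coefficient cannot be killed), while r is constant; formally one
   peels off leading terms of v by induction on its size
   (lead_coef_cmultiple, cmultiple_cancel).
   Given this, if u * f + v * g = r with f = c h, then v = c w, hence
   r = c (u h + w g), so r = c s with s the constant term of u h + w g, and
   u h + w g = s in (R/Ann c)[x] because c kills the difference.  Conversely,
   u h + v g = s modulo Ann(c) gives u f + (c v) g = c s exactly; both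
   directions use that equality modulo Ann(c) is equality after scaling by c
   (eq_mod_AnnP). *)

Lemma poly_split_lead (R : nzRingType) (p : {poly R}) :
  p = take_poly (size p).-1 p + lead_coef p *: 'X^((size p).-1).
Proof.
apply/polyP => i; rewrite coefD coefZ coefXn coef_take_poly.
case: ltngtP => [_|lt_m_i|->]; rewrite ?mulr0 ?addr0 ?mulr1 ?add0r //.
by rewrite nth_default // (leq_trans (leqSpred _)).
Qed.

Section Multiples.
Variables (R : comNzRingType) (c : R).

(* The polynomials that are c times a polynomial, i.e. the kernel of the
   reduction R[x] -> (R/cR)[x]. *)
Definition cmultiple (p : {poly R}) : Prop := exists q, p = c *: q.

Lemma cmultiple0 : cmultiple 0.
Proof. by exists 0; rewrite scaler0. Qed.

Lemma cmultipleD p q : cmultiple p -> cmultiple q -> cmultiple (p + q).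
Proof. by move=> [p' ->] [q' ->]; exists (p' + q'); rewrite scalerDr. Qed.

Lemma cmultipleB p q : cmultiple p -> cmultiple q -> cmultiple (p - q).
Proof. by move=> [p' ->] [q' ->]; exists (p' - q'); rewrite scalerBr. Qed.

Lemma cmultipleMr p q : cmultiple p -> cmultiple (p * q).
Proof. by move=> [p' ->]; exists (p' * q); rewrite scalerAl. Qed.

Lemma cmultiple_scale a p : (exists t, a = c * t) -> cmultiple (a *: p).
Proof. by move=> [t ->]; exists (t *: p); rewrite scalerA. Qed.

Lemma eq_mod_AnnP p q : eq_mod_Ann c p q <-> c *: p = c *: q.
Proof.
split=> [E | E i].
  by apply/polyP => i; apply/eqP; rewrite !coefZ -subr_eq0 -mulrBr mulrC
    -coefB; apply/eqP/E.
by rewrite /Ann coefB mulrC mulrBr -!coefZ E subrr.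
Qed.

Variables (g : {poly R}) (b : R).
Hypotheses (g_nonconst : (1 < size g)%N) (g_lead_unit : lead_coef g * b = 1).

(* If v * g is congruent to a constant modulo c, the leading coefficient of a
   nonzero v lies in cR: it is the coefficient of v * g in positive degree
   (size v + size g).-2, divided by the unit lead_coef g. *)
Lemma lead_coef_cmultiple (v : {poly R}) (r : R) :
  cmultiple (v * g - r%:P) -> v != 0 -> exists t, lead_coef v = c * t.
Proof.
move=> [q Eq] v_neq0; set k := (size v + size g).-2.
have k_gt0 : (0 < k)%N.
  by move: (size_poly_gt0 v) g_nonconst; rewrite v_neq0 /k => ??; lia.
have top : lead_coef v * lead_coef g = c * q`_k.
  by rewrite mul_lead_coef -coefZ -Eq coefB coefC (negbTE (lt0n_neq0 k_gt0))
    subr0.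
by exists (q`_k * b); rewrite -[LHS]mulr1 -g_lead_unit mulrA top mulrA.
Qed.

Lemma cmultiple_cancel (v : {poly R}) (r : R) :
  cmultiple (v * g - r%:P) -> cmultiple v.
Proof.
move: {2}(size v) (leqnn (size v)) => n; elim: n v => [|n IH] v.
  by rewrite leqn0 size_poly_eq0 => /eqP -> _; apply: cmultiple0.
move=> size_v vg_r; have [-> | v_neq0] := eqVneq v 0; first exact: cmultiple0.
set m := (size v).-1; set w := take_poly m v.
set a := lead_coef v *: 'X^m; have Ev : v = w + a := poly_split_lead v.
have a_mult : cmultiple a.
  by apply: cmultiple_scale; apply: lead_coef_cmultiple vg_r v_neq0.
have wg_r : cmultiple (w * g - r%:P).
  have -> : w * g - r%:P = (v * g - r%:P) - a * g.
    by rewrite [v in RHS]Ev mulrDl addrAC addrK.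
  by apply: cmultipleB => //; apply: cmultipleMr.
have size_w : (size w <= n)%N.
  by apply: leq_trans (size_take_poly _ _) _; rewrite /m; lia.
by rewrite Ev; apply: cmultipleD => //; apply: IH.
Qed.

End Multiples.

Theorem lemma5p2 (R : comNzRingType) (HR : principal_artinian R)
  (f g h : {poly R}) (c : R) :
  (1 < size g)%N ->
  (exists b : R, lead_coef g * b = 1) ->
  generates c (content_ideal f) ->
  f = c *: h ->
  forall r : R, Rres f g r <-> exists s : R, Rres_mod_Ann c h g s /\ r = c * s.
Proof.
move=> g_nonconst [b g_lead_unit] _ -> r; split.
  move=> [u [v Euv]].
  have [w v_eq] : cmultiple c v.
    apply: (cmultiple_cancel g_nonconst g_lead_unit (r := r)).
    exists (- (u * h)).
    by rewrite -Euv -scalerAr scalerN opprD addrCA subrr addr0.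
  have Er : r%:P = c *: (u * h + w * g).
    by rewrite -Euv v_eq scalerDr scalerAr scalerAl.
  set s := (u * h + w * g)`_0.
  have Ers : r = c * s by rewrite /s -coefZ -Er coefC.
  exists s; split => //; exists u, w; apply/eq_mod_AnnP.
  by rewrite -Er Ers scale_polyC.
move=> [s [[u [v /eq_mod_AnnP Euv]] ->]].
exists u, (c *: v).
by rewrite -scalerAr -scalerAl -scalerDr Euv scale_polyC.
Qed.
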